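(* On Gauss diagrams of twisted knot diagrams, the forbidden move $F1$ can be realized by a finite sequence of moves $F2$, $T2$ and $T3$, and the forbidden move $F2$ can be realized by a finite sequence of moves $F1$, $T2$ and $T3$. Consequently, in the presence of $T2$ and $T3$, allowing $F1$ is equivalent to allowing $F2$.
   Context: A twisted knot diagram is a virtual knot diagram (an oriented generic immersed circle in the plane whose double points are either classical crossings, carrying over/under information, or virtual crossings, carrying none) which may in addition carry finitely many bars: short segments marked transversally on arcs, away from crossings. Gauss diagram of a twisted knot diagram: an oriented circle (the parametrizing circle of the knot) on which are marked, in the order met when traversing the knot from a basepoint, the two preimages of each classical crossing and one point for each bar. For each classical crossing a chord joins its two preimages, oriented from the overcrossing preimage (the arrowtail) to the undercrossing preimage (the arrowhead), and labelled by the sign $\varepsilon\in\{+,-\}$ of the crossing. Virtual crossings are not recorded. Two marked points (chord endpoints or bars) are called adjacent if no other marked point lies between them on the circle. Moves on Gauss diagrams (each may be applied in either direction): - $T2$: add or remove two adjacent bars. - $T3$: if each endpoint of a chord is immediately preceded and immediately followed by a bar, remove these four bars, reverse the orientation of the chord and change its sign (the Gauss-diagram version of the twisted Reidemeister move in which a classical crossing having a bar on each of its four incident arcs next to the crossing is replaced by the crossing with over- and under-strand exchanged, the four bars being removed). - $F1$: exchange the positions of two adjacent arrowheads of different chords (signs arbitrary). - $F2$: exchange the positions of two adjacent arrowtails of different chords (signs arbitrary). *)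

From Stdlib Require Import List Arith Relations.
Import ListNotations.

(* A marked point on the parametrizing circle: a bar, or an endpoint of a
   chord.  A chord is identified by a label [c : nat]; its sign [s : bool]
   (true = +, false = -) is recorded on both endpoints.  The arrowtail is the
   overcrossing preimage, the arrowhead the undercrossing preimage. *)
Inductive mark : Type :=
| Bar : mark
| Tail : nat -> bool -> mark
| Head : nat -> bool -> mark.

(* A Gauss diagram is the cyclic word of marked points read from a basepoint;
   the choice of basepoint is immaterial (see [rot]). *)
Definition gauss := list mark.

Definition is_tail (c : nat) (m : mark) : bool :=
  match m with Tail c' _ => Nat.eqb c c' | _ => false end.
Definition is_head (c : nat) (m : mark) : bool :=
  match m with Head c' _ => Nat.eqb c c' | _ => false end.

Definition wf (D : gauss) : Prop :=
  (forall c, length (filter (is_tail c) D) = length (filter (is_head c) D)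
             /\ length (filter (is_tail c) D) <= 1)
  /\ (forall c s s', In (Tail c s) D -> In (Head c s') D -> s = s').

Inductive rot : gauss -> gauss -> Prop :=
| rot_intro l1 l2 : rot (l1 ++ l2) (l2 ++ l1).

Inductive T2 : gauss -> gauss -> Prop :=
| T2_intro l1 l2 : T2 (l1 ++ l2) (l1 ++ Bar :: Bar :: l2).

Inductive T3 : gauss -> gauss -> Prop :=
| T3_th l1 l2 l3 c s :
    T3 (l1 ++ Bar :: Tail c s :: Bar :: l2 ++ Bar :: Head c s :: Bar :: l3)
       (l1 ++ Head c (negb s) :: l2 ++ Tail c (negb s) :: l3)
| T3_ht l1 l2 l3 c s :
    T3 (l1 ++ Bar :: Head c s :: Bar :: l2 ++ Bar :: Tail c s :: Bar :: l3)
       (l1 ++ Tail c (negb s) :: l2 ++ Head c (negb s) :: l3).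

Inductive F1 : gauss -> gauss -> Prop :=
| F1_intro l1 l2 a s b t :
    a <> b ->
    F1 (l1 ++ Head a s :: Head b t :: l2) (l1 ++ Head b t :: Head a s :: l2).

Inductive F2 : gauss -> gauss -> Prop :=
| F2_intro l1 l2 a s b t :
    a <> b ->
    F2 (l1 ++ Tail a s :: Tail b t :: l2) (l1 ++ Tail b t :: Tail a s :: l2).

Definition union4 (R1 R2 R3 R4 : gauss -> gauss -> Prop) : gauss -> gauss -> Prop :=
  fun x y => R1 x y \/ R2 x y \/ R3 x y \/ R4 x y.

Definition equiv_with (F : gauss -> gauss -> Prop) : gauss -> gauss -> Prop :=
  clos_refl_sym_trans gauss (union4 rot F T2 T3).

From Stdlib Require Import List Relations.
From Stdlib Require Import Arith Bool Lia Permutation.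
Import ListNotations.

(* Applying T3 backwards to two chords whose arrowheads are adjacent surrounds
   all four endpoints with bars and turns those arrowheads into arrowtails
   separated by two adjacent bars.  Removing these bars by T2, exchanging the
   arrowtails by F2 and replaying the moves backwards exchanges the original
   arrowheads.  Reversing every chord preserves basepoint changes, T2 and T3
   and exchanges F1 with F2, which gives the converse.  Every move preserves
   the balance of arrowtails and arrowheads per signed chord, and this is all
   the simulation of a single step needs, so it extends to whole sequences. *)

Definition mark_eq_dec (x y : mark) : {x = y} + {x <> y}.
Proof. decide equality; first [apply Bool.bool_dec | apply Nat.eq_dec]. Qed.

(* Weaker than [wf], but preserved by every move. *)
Definition balanced (D : gauss) : Prop :=
  forall c s, count_occ mark_eq_dec D (Tail c s) = count_occ mark_eq_dec D (Head c s).

Lemma count_occ_le_filter (q : mark -> bool) (D : gauss) (x : mark) :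
  q x = true -> count_occ mark_eq_dec D x <= length (filter q D).
Proof.
  intros Hx; induction D as [|m D IH]; simpl; [lia|].
  destruct (mark_eq_dec m x) as [->|_]; [rewrite Hx; simpl; lia|].
  destruct (q m); simpl; lia.
Qed.

Lemma In_filter_length_pos (q : mark -> bool) (D : gauss) (x : mark) :
  In x (filter q D) -> 0 < length (filter q D).
Proof. destruct (filter q D); simpl; [contradiction | lia]. Qed.

Lemma wf_head_of_tail D c s : wf D -> In (Tail c s) D -> In (Head c s) D.
Proof.
  intros [Hlen Hsign] Ht.
  assert (Hpos : 0 < length (filter (is_head c) D)).
  { rewrite <- (proj1 (Hlen c)). apply (In_filter_length_pos _ _ (Tail c s)).
    apply filter_In; split; [exact Ht | apply Nat.eqb_refl]. }
  destruct (filter (is_head c) D) as [|m l] eqn:E; simpl in Hpos; [lia|].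
  assert (Hm : In m (filter (is_head c) D)) by (rewrite E; left; reflexivity).
  apply filter_In in Hm as [Hm Hc].
  destruct m as [| |c' s']; try discriminate.
  apply Nat.eqb_eq in Hc; subst c'.
  rewrite (Hsign _ _ _ Ht Hm); exact Hm.
Qed.

Lemma wf_tail_of_head D c s : wf D -> In (Head c s) D -> In (Tail c s) D.
Proof.
  intros [Hlen Hsign] Hh.
  assert (Hpos : 0 < length (filter (is_tail c) D)).
  { rewrite (proj1 (Hlen c)). apply (In_filter_length_pos _ _ (Head c s)).
    apply filter_In; split; [exact Hh | apply Nat.eqb_refl]. }
  destruct (filter (is_tail c) D) as [|m l] eqn:E; simpl in Hpos; [lia|].
  assert (Hm : In m (filter (is_tail c) D)) by (rewrite E; left; reflexivity).
  apply filter_In in Hm as [Hm Hc].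
  destruct m as [|c' s'|]; try discriminate.
  apply Nat.eqb_eq in Hc; subst c'.
  rewrite <- (Hsign _ _ _ Hm Hh); exact Hm.
Qed.

Lemma wf_balanced D : wf D -> balanced D.
Proof.
  intros HD c s.
  destruct (proj1 HD c) as [Heq Hle1].
  assert (Ht : count_occ mark_eq_dec D (Tail c s) <= 1).
  { etransitivity; [apply (count_occ_le_filter (is_tail c)), Nat.eqb_refl | exact Hle1]. }
  assert (Hh : count_occ mark_eq_dec D (Head c s) <= 1).
  { etransitivity; [apply (count_occ_le_filter (is_head c)), Nat.eqb_refl | lia]. }
  pose proof (wf_head_of_tail D c s HD) as Hth.
  pose proof (wf_tail_of_head D c s HD) as Hht.
  rewrite !(count_occ_In mark_eq_dec) in Hth, Hht.
  lia.
Qed.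

Lemma balanced_tail_of_head D c s : balanced D -> In (Head c s) D -> In (Tail c s) D.
Proof. intros HD. rewrite !(count_occ_In mark_eq_dec), HD. exact id. Qed.

Lemma balanced_perm D D' : Permutation D D' -> balanced D -> balanced D'.
Proof.
  intros HP HD c s. rewrite (Permutation_count_occ mark_eq_dec) in HP.
  rewrite <- !HP. apply HD.
Qed.

Lemma T2_balanced D D' : T2 D D' -> (balanced D <-> balanced D').
Proof.
  intros []. unfold balanced. setoid_rewrite count_occ_app. simpl.
  split; intros H c s; specialize (H c s);
    repeat destruct mark_eq_dec; try discriminate; lia.
Qed.

Lemma T3_balanced D D' : T3 D D' -> (balanced D <-> balanced D').
Proof.
  intros []; unfold balanced; split; intros H c0 s0; specialize (H c0 s0);
    destruct s, s0; rewrite ?count_occ_app in *; simpl in *;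
    rewrite ?count_occ_app in *; simpl in *;
    repeat destruct mark_eq_dec; try congruence; lia.
Qed.

Lemma rot_perm D D' : rot D D' -> Permutation D D'.
Proof. intros []; apply Permutation_app_comm. Qed.

Lemma F1_perm D D' : F1 D D' -> Permutation D D'.
Proof. intros []; apply Permutation_app_head, perm_swap. Qed.

Lemma F2_perm D D' : F2 D D' -> Permutation D D'.
Proof. intros []; apply Permutation_app_head, perm_swap. Qed.

Section Equiv.
Variable F : gauss -> gauss -> Prop.
Hypothesis F_perm : forall D D', F D D' -> Permutation D D'.

Lemma equiv_with_balanced D D' : equiv_with F D D' -> (balanced D <-> balanced D').
Proof.
  induction 1 as [D D' [H|[H|[H|H]]]| | |]; try tauto.
  - split; apply balanced_perm; [|symmetry]; apply rot_perm, H.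
  - split; apply balanced_perm; [|symmetry]; apply F_perm, H.
  - apply T2_balanced, H.
  - apply T3_balanced, H.
Qed.

Lemma equiv_with_sub G :
  (forall D D', balanced D -> F D D' -> equiv_with G D D') ->
  forall D D', balanced D -> equiv_with F D D' -> equiv_with G D D'.
Proof.
  intros HG D D' HD H; revert HD.
  induction H as [D D' [H|[H|[H|H]]]|D|D D' H IH|D D' D'' H IH _ IH']; intros HD.
  - apply rst_step; left; exact H.
  - apply HG; assumption.
  - apply rst_step; right; right; left; exact H.
  - apply rst_step; right; right; right; exact H.
  - apply rst_refl.
  - apply rst_sym, IH, (equiv_with_balanced _ _ H), HD.
  - apply rst_trans with D'; [apply IH, HD|].
    apply IH', (equiv_with_balanced _ _ H), HD.
Qed.

End Equiv.

Definition reverse_mark (m : mark) : mark :=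
  match m with Bar => Bar | Tail c s => Head c s | Head c s => Tail c s end.

Definition reverse_chords : gauss -> gauss := map reverse_mark.

Lemma reverse_chords_involutive D : reverse_chords (reverse_chords D) = D.
Proof.
  unfold reverse_chords; rewrite map_map.
  rewrite <- (map_id D) at 2; apply map_ext; intros []; reflexivity.
Qed.

Lemma count_occ_reverse_chords D m :
  count_occ mark_eq_dec (reverse_chords D) (reverse_mark m) = count_occ mark_eq_dec D m.
Proof.
  induction D as [|m' D IH]; simpl; [reflexivity|].
  destruct (mark_eq_dec (reverse_mark m') (reverse_mark m)) as [E|E];
    destruct (mark_eq_dec m' m) as [E'|E']; subst; try congruence.
  destruct m, m'; simpl in E; congruence.
Qed.

Lemma balanced_reverse_chords D : balanced D -> balanced (reverse_chords D).
Proof.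
  intros HD c s.
  change (Tail c s) with (reverse_mark (Head c s)).
  change (Head c s) with (reverse_mark (Tail c s)) at 2.
  rewrite !count_occ_reverse_chords; symmetry; apply HD.
Qed.

Lemma rot_reverse_chords D D' : rot D D' -> rot (reverse_chords D) (reverse_chords D').
Proof. intros []; unfold reverse_chords; rewrite !map_app; constructor. Qed.

Lemma T2_reverse_chords D D' : T2 D D' -> T2 (reverse_chords D) (reverse_chords D').
Proof. intros []; unfold reverse_chords; rewrite !map_app; constructor. Qed.

Lemma T3_reverse_chords D D' : T3 D D' -> T3 (reverse_chords D) (reverse_chords D').
Proof.
  intros []; unfold reverse_chords; rewrite !map_app; simpl; rewrite !map_app;
    constructor.
Qed.

Lemma F1_reverse_chords D D' : F1 D D' -> F2 (reverse_chords D) (reverse_chords D').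
Proof. intros []; unfold reverse_chords; rewrite !map_app; constructor; assumption. Qed.

Lemma F2_reverse_chords D D' : F2 D D' -> F1 (reverse_chords D) (reverse_chords D').
Proof. intros []; unfold reverse_chords; rewrite !map_app; constructor; assumption. Qed.

Lemma equiv_with_reverse_chords (F G : gauss -> gauss -> Prop) :
  (forall D D', F D D' -> G (reverse_chords D) (reverse_chords D')) ->
  forall D D', equiv_with F D D' -> equiv_with G (reverse_chords D) (reverse_chords D').
Proof.
  intros HFG D D'.
  induction 1 as [D D' [H|[H|[H|H]]]| | |D D' D'' _ IH _ IH'].
  - apply rst_step; left; apply rot_reverse_chords, H.
  - apply rst_step; right; left; apply HFG, H.
  - apply rst_step; right; right; left; apply T2_reverse_chords, H.
  - apply rst_step; right; right; right; apply T3_reverse_chords, H.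
  - apply rst_refl.
  - apply rst_sym; assumption.
  - apply rst_trans with (reverse_chords D'); assumption.
Qed.

Lemma equiv_with_eq F D D' E E' :
  equiv_with F D D' -> E = D -> E' = D' -> equiv_with F E E'.
Proof. intros H -> ->; exact H. Qed.

Ltac list_eq := simpl; repeat (rewrite <- app_assoc; simpl); reflexivity.

Lemma turn_chord F l1 l2 l3 c s :
  equiv_with F (l1 ++ Head c s :: l2 ++ Tail c s :: l3)
    (l1 ++ Bar :: Tail c (negb s) :: Bar :: l2 ++ Bar :: Head c (negb s) :: Bar :: l3).
Proof.
  apply rst_sym, rst_step; right; right; right.
  pose proof (T3_th l1 l2 l3 c (negb s)) as H; rewrite negb_involutive in H; exact H.
Qed.

Lemma turn_chords_crossing F a b s t P Q S :
  equiv_with F (Head a s :: Head b t :: P ++ Tail a s :: Q ++ Tail b t :: S)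
    (Bar :: Tail a (negb s) :: Bar :: Bar :: Tail b (negb t) :: Bar ::
     P ++ Bar :: Head a (negb s) :: Bar :: Q ++ Bar :: Head b (negb t) :: Bar :: S).
Proof.
  apply rst_trans with
    (Bar :: Tail a (negb s) :: Bar :: Head b t ::
     P ++ Bar :: Head a (negb s) :: Bar :: Q ++ Tail b t :: S).
  - exact (turn_chord F [] (Head b t :: P) (Q ++ Tail b t :: S) a s).
  - eapply equiv_with_eq;
      [exact (turn_chord F [Bar; Tail a (negb s); Bar]
                (P ++ Bar :: Head a (negb s) :: Bar :: Q) S b t) | list_eq | list_eq].
Qed.

Lemma turn_chords_nested F a b s t P Q S :
  equiv_with F (Head a s :: Head b t :: P ++ Tail b t :: Q ++ Tail a s :: S)
    (Bar :: Tail a (negb s) :: Bar :: Bar :: Tail b (negb t) :: Bar ::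
     P ++ Bar :: Head b (negb t) :: Bar :: Q ++ Bar :: Head a (negb s) :: Bar :: S).
Proof.
  apply rst_trans with
    (Bar :: Tail a (negb s) :: Bar :: Head b t ::
     P ++ Tail b t :: Q ++ Bar :: Head a (negb s) :: Bar :: S).
  - eapply equiv_with_eq;
      [exact (turn_chord F [] (Head b t :: P ++ Tail b t :: Q) S a s) | list_eq | list_eq].
  - exact (turn_chord F [Bar; Tail a (negb s); Bar] P
             (Q ++ Bar :: Head a (negb s) :: Bar :: S) b t).
Qed.

Lemma swap_barred_tails a b s t R : a <> b ->
  equiv_with F2 (Bar :: Tail a s :: Bar :: Bar :: Tail b t :: Bar :: R)
    (Bar :: Tail b t :: Bar :: Bar :: Tail a s :: Bar :: R).
Proof.
  intros Hab.
  apply rst_trans with (Bar :: Tail a s :: Tail b t :: Bar :: R).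
  { apply rst_sym, rst_step; right; right; left.
    exact (T2_intro [Bar; Tail a s] (Tail b t :: Bar :: R)). }
  apply rst_trans with (Bar :: Tail b t :: Tail a s :: Bar :: R).
  { apply rst_step; right; left. exact (F2_intro [Bar] (Bar :: R) a s b t Hab). }
  apply rst_step; right; right; left.
  exact (T2_intro [Bar; Tail b t] (Tail a s :: Bar :: R)).
Qed.

Lemma swap_heads a b s t M : a <> b -> In (Tail a s) M -> In (Tail b t) M ->
  equiv_with F2 (Head a s :: Head b t :: M) (Head b t :: Head a s :: M).
Proof.
  intros Hab Ha Hb.
  destruct (in_split _ _ Ha) as [P [R ->]].
  apply in_app_or in Hb as [Hb|[Hb|Hb]].
  - destruct (in_split _ _ Hb) as [P1 [P2 ->]].
    rewrite <- app_assoc; simpl.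
    eapply rst_trans; [apply turn_chords_nested|].
    eapply rst_trans; [apply swap_barred_tails, Hab|].
    apply rst_sym, turn_chords_crossing.
  - congruence.
  - destruct (in_split _ _ Hb) as [Q [S ->]].
    eapply rst_trans; [apply turn_chords_crossing|].
    eapply rst_trans; [apply swap_barred_tails, Hab|].
    apply rst_sym, turn_chords_nested.
Qed.

Lemma F1_by_F2 D D' : balanced D -> F1 D D' -> equiv_with F2 D D'.
Proof.
  intros HD HF; revert HD; destruct HF as [l1 l2 a s b t Hab]; intros HD.
  pose proof (rot_intro l1 (Head a s :: Head b t :: l2)) as Hrot.
  assert (HM : balanced (Head a s :: Head b t :: l2 ++ l1))
    by exact (balanced_perm _ _ (rot_perm _ _ Hrot) HD).
  assert (Htail : forall c u, In (Head c u) [Head a s; Head b t] ->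
                              In (Tail c u) (l2 ++ l1)).
  { intros c u Hh.
    assert (H : In (Tail c u) (Head a s :: Head b t :: l2 ++ l1)).
    { apply balanced_tail_of_head; [exact HM|].
      destruct Hh as [<-|[<-|[]]]; simpl; auto. }
    destruct H as [H|[H|H]]; [discriminate | discriminate | exact H]. }
  apply rst_trans with (Head a s :: Head b t :: l2 ++ l1).
  { apply rst_step; left; exact Hrot. }
  apply rst_trans with (Head b t :: Head a s :: l2 ++ l1).
  { apply swap_heads; [exact Hab | apply Htail; simpl; auto ..]. }
  apply rst_step; left; exact (rot_intro (Head b t :: Head a s :: l2) l1).
Qed.

Lemma F2_by_F1 D D' : balanced D -> F2 D D' -> equiv_with F1 D D'.
Proof.
  intros HD H.
  rewrite <- (reverse_chords_involutive D), <- (reverse_chords_involutive D').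
  apply (equiv_with_reverse_chords F2 F1 F2_reverse_chords).
  apply F1_by_F2; [apply balanced_reverse_chords, HD | apply F2_reverse_chords, H].
Qed.

Theorem mainTheorem3 :
  (forall D D', wf D -> F1 D D' -> equiv_with F2 D D')
  /\ (forall D D', wf D -> F2 D D' -> equiv_with F1 D D')
  /\ (forall D D', wf D -> (equiv_with F1 D D' <-> equiv_with F2 D D')).
Proof.
  split; [|split]; intros D D' HD; apply wf_balanced in HD.
  - apply F1_by_F2, HD.
  - apply F2_by_F1, HD.
  - split; apply equiv_with_sub; auto using F1_perm, F2_perm, F1_by_F2, F2_by_F1.
Qed.
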